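(* Consider an episodic RMDP with $\mathcal{S}\times\mathcal{A}$-rectangular total-variation robust sets of radius $\rho\in[0,1)$ satisfying the vanishing minimal value assumption. Let $\pi$ be any deterministic Markov policy, and define $\widetilde T_h(\cdot|s,a)\in\arg\min_{P\in\mathcal{P}_\rho(s,a;P^\star_h)}\mathbb{E}_{P}[V^\pi_{h+1,P^\star,\boldsymbol{\Phi}}]$ for all $(s,a,h)$, $\widetilde T=\{\widetilde T_h\}_{h=1}^H$. Then $$\mathbb{E}_{(s_h,a_h)\sim(\widetilde T,\pi)}\Big[\sum_{h=1}^H\mathbb{V}_{\widetilde T_h(\cdot|s_h,a_h)}\big[V^\pi_{h+1,P^\star,\boldsymbol{\Phi}}\big]\Big]\le2H\cdot\min\{H,\rho^{-1}\},$$ where the expectation is over trajectories starting from the initial state $s_1$ and generated by $\pi$ under the kernels $\widetilde T$.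
   Context: Episodic RMDP $(\mathcal{S},\mathcal{A},H,P^\star,R,\boldsymbol{\Phi})$: finite $\mathcal{S},\mathcal{A}$, nominal kernels $P^\star_h$, rewards $R_h\in[0,1]$, fixed initial state $s_1$. TV robust set $\boldsymbol{\Phi}(P_h)=\bigotimes_{(s,a)}\mathcal{P}_\rho(s,a;P_h)$, $\mathcal{P}_\rho(s,a;P_h)=\{\widetilde P\in\Delta(\mathcal{S}):\frac12\sum_{s'}|\widetilde P(s')-P_h(s'|s,a)|\le\rho\}$. $V^\pi_{h,P^\star,\boldsymbol{\Phi}}(s)$ is the infimum over all $\widetilde P_i(\cdot|s',a')\in\mathcal{P}_\rho(s',a';P^\star_i)$ of the expected $\sum_{i=h}^HR_i(s_i,a_i)$ under $\pi$ from $s_h=s$; $V_{H+1}\equiv0$; $V^\star=\max_\pi V^\pi$. Vanishing minimal value assumption: $\min_sV^\star_{1,P^\star,\boldsymbol{\Phi}}(s)=0$ and $s_1\notin\arg\min_sV^\star_{1,P^\star,\boldsymbol{\Phi}}(s)$. $\mathbb{V}_p[f]=\mathbb{E}_p[f^2]-(\mathbb{E}_p[f])^2$. $\rho^{-1}=\infty$ if $\rho=0$. *)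

From HB Require Import structures.
From mathcomp Require Import all_boot all_order all_algebra.
From mathcomp Require Import classical_sets reals.
Set Implicit Arguments. Unset Strict Implicit. Unset Printing Implicit Defensive.
Import Order.TTheory GRing.Theory Num.Theory.
Local Open Scope classical_set_scope.
Local Open Scope ring_scope.

Section RMDP.
Variables (R : realType) (S A : finType).

(* Steps are indexed h = 1, ..., H (as naturals); a kernel family gives
   P h s a s' = P_h(s'|s,a). *)
Definition kernel := nat -> S -> A -> S -> R.

Definition is_dist (T : finType) (q : T -> R) :=
  (forall t, 0 <= q t) /\ \sum_t q t = 1.

Definition TVdist (p q : S -> R) : R := 2^-1 * \sum_s `|p s - q s|.

Definition robust_ball (rho : R) (p q : S -> R) :=
  is_dist q /\ TVdist q p <= rho.

Definition expect (p f : S -> R) : R := \sum_s p s * f s.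
Definition variance (p f : S -> R) : R :=
  expect p (fun s => f s ^+ 2) - (expect p f) ^+ 2.

(* Markov (possibly randomized) policies: pi h s a = pi_h(a|s). *)
Definition mpolicy := nat -> S -> A -> R.
Definition markov_policy (H : nat) (pi : mpolicy) :=
  forall h s, (1 <= h <= H)%N -> is_dist (pi h s).
Definition det_policy (d : nat -> S -> A) : mpolicy :=
  fun h s a => if a == d h s then 1 else 0.

(* Expected return sum_{i=h}^{h+k-1} R_i(s_i,a_i) under pi and kernels P, from s_h = s *)
Fixpoint eval_aux (Rw : nat -> S -> A -> R) (pi : mpolicy) (P : kernel)
  (k h : nat) (s : S) : R :=
  match k with
  | 0 => 0
  | k'.+1 => \sum_a pi h s a *
      (Rw h s a + \sum_s' P h s a s' * eval_aux Rw pi P k' h.+1 s')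
  end.

(* V^pi_{h,P}(s): expected sum_{i=h}^H R_i; equals 0 for h = H+1 *)
Definition value (H : nat) Rw pi P h s : R := eval_aux Rw pi P (H.+1 - h) h s.

Definition robust_value (H : nat) (rho : R) (Pstar : kernel) Rw (pi : mpolicy)
  (h : nat) (s : S) : R :=
  inf [set x | exists Pt : kernel,
        (forall i s' a', (h <= i <= H)%N -> robust_ball rho (Pstar i s' a') (Pt i s' a'))
        /\ x = value H Rw pi Pt h s].

Definition optimal_value (H : nat) (rho : R) (Pstar : kernel) Rw (h : nat) (s : S) : R :=
  sup [set x | exists pi : mpolicy, markov_policy H pi /\
        x = robust_value H rho Pstar Rw pi h s].

(* occ T d s1 n s = Pr(s_{n+1} = s) for the trajectory from s_1 under
   deterministic policy d and kernels T *)
Fixpoint occ (T : kernel) (d : nat -> S -> A) (s1 : S) (n : nat) : S -> R :=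
  match n with
  | 0 => fun s => if s == s1 then 1 else 0
  | n'.+1 => fun s' => \sum_s occ T d s1 n' s * T n' .+1 s (d n'.+1 s) s'
  end.

(* min{H, rho^-1} with rho^-1 = +oo when rho = 0 *)
Definition minH_invrho (H : nat) (rho : R) : R :=
  if rho == 0 then H%:R else Num.min H%:R rho^-1.

End RMDP.

(* The argmin kernel [Tt] attains the robust value V of the policy, so V obeys the
   Bellman equation V_h = r_h + E_Tt[V_(h+1)].  Hence
   Var_Tt[V_(h+1)] = E_Tt[V_(h+1)^2] - (V_h - r_h)^2 <= E_Tt[V_(h+1)^2] - V_h^2 + 2 max V,
   and along the Tt-trajectory the squared terms telescope, leaving 2 H max V.
   Trivially V <= H; and V <= 1/rho because, by the vanishing minimal value
   assumption, every step has a state of zero value onto which the adversary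
   may move mass rho. *)
From HB Require Import structures.
From mathcomp Require Import all_boot all_order all_algebra.
From mathcomp Require Import classical_sets reals.
From mathcomp Require Import zify ring lra.
Set Implicit Arguments. Unset Strict Implicit. Unset Printing Implicit Defensive.
Import Order.TTheory GRing.Theory Num.Theory.
Local Open Scope ring_scope.

Lemma nat_down_ind (m n : nat) (P : nat -> Prop) :
  P n -> (forall h, (m <= h < n)%N -> P h.+1 -> P h) ->
  forall h, (m <= h <= n)%N -> P h.
Proof.
move=> Pn IH h /andP[mh hn].
suff Psub k : (k <= n - m)%N -> P (n - k)%N by rewrite -(subKn hn); apply: Psub; lia.
elim: k => [|k IHk] k_le; first by rewrite subn0.
apply: IH; first lia.
have -> : (n - k.+1).+1 = (n - k)%N by lia.
by apply: IHk; lia.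
Qed.

Section Distributions.
Variable R : realType.

Lemma sum_if_eq_mul (T : finType) (z : T) (F : T -> R) :
  \sum_t (if t == z then 1 else 0) * F t = F z.
Proof.
rewrite (bigD1 z) //= eqxx mul1r big1 ?addr0 // => t /negbTE ->.
by rewrite mul0r.
Qed.

Lemma is_dist_if_eq (T : finType) (z : T) : is_dist (fun t => if t == z then 1 else 0 : R).
Proof.
split=> [t|]; first by case: eqP.
by rewrite (bigD1 z) //= eqxx big1 ?addr0 // => t /negbTE ->.
Qed.

Lemma is_dist_support (T : finType) (q : T -> R) : is_dist q -> exists t, q t != 0.
Proof.
move=> [_ q1]; case: (pickP (fun t => q t != 0)) => [t qt|q0]; first by exists t.
move: q1; rewrite big1 => [/eqP|t _]; first by rewrite eq_sym oner_eq0.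
by apply/eqP/negbFE/q0.
Qed.

Lemma expect_eq0_exists_zero (S : finType) (p f : S -> R) :
  is_dist p -> (forall s, 0 <= f s) -> expect p f = 0 -> exists s, f s = 0.
Proof.
move=> pd f0 /psumr_eq0P pf0; have [s ps] := is_dist_support pd; exists s.
have /eqP := pf0 (fun t _ => mulr_ge0 (pd.1 t) (f0 t)) s isT.
by rewrite mulf_eq0 (negbTE ps) => /eqP.
Qed.

Lemma expect_ge0 (S : finType) (p f : S -> R) :
  is_dist p -> (forall s, 0 <= f s) -> 0 <= expect p f.
Proof. by move=> [p0 _] f0; apply: sumr_ge0 => s _; rewrite mulr_ge0. Qed.

Lemma expect_le_bound (S : finType) (p f : S -> R) (c : R) :
  is_dist p -> (forall s, f s <= c) -> expect p f <= c.
Proof.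
move=> [p0 p1] fc; rewrite -[c]mul1r -p1 mulr_suml.
by apply: ler_sum => s _; rewrite ler_wpM2l.
Qed.

Lemma ler_expect (S : finType) (p f g : S -> R) :
  is_dist p -> (forall s, f s <= g s) -> expect p f <= expect p g.
Proof. by move=> [p0 _] fg; apply: ler_sum => s _; rewrite ler_wpM2l. Qed.

Lemma expect_cst1 (S : finType) (p : S -> R) : is_dist p -> expect p (fun _ => 1) = 1.
Proof. by move=> [_ p1]; rewrite /expect; under eq_bigr do rewrite mulr1. Qed.

Lemma robust_ball_refl (S : finType) (rho : R) (p : S -> R) :
  0 <= rho -> is_dist p -> robust_ball rho p p.
Proof.
move=> rho0 pd; split=> //.
by rewrite /TVdist big1 ?mulr0 // => s _; rewrite subrr normr0.
Qed.

Lemma robust_ball_mix (S : finType) (rho : R) (p : S -> R) (z : S) :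
  0 <= rho <= 1 -> is_dist p ->
  robust_ball rho p (fun s => (1 - rho) * p s + rho * (if s == z then 1 else 0)).
Proof.
move=> /andP[rho0 rho1] pd; have [p0 p1] := pd; have [dz0 dz1] := is_dist_if_eq z.
split; first split.
- by move=> s; rewrite addr_ge0 ?mulr_ge0 ?subr_ge0.
- by rewrite big_split /= -!mulr_sumr p1 dz1 !mulr1 subrK.
rewrite /TVdist.
have diffE s : (1 - rho) * p s + rho * (if s == z then 1 else 0) - p s
  = rho * ((if s == z then 1 else 0) - p s).
  by case: (s == z); ring.
under eq_bigr => s _ do rewrite diffE normrM ger0_norm //.
rewrite -mulr_sumr mulrCA ler_piMr // mulrC ler_pdivrMr // mul1r.
rewrite -[2]/(1 + 1) -[in X in _ <= X + _]dz1 -[in X in _ <= _ + X]p1 -big_split.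
by apply: ler_sum => s _; rewrite (le_trans (ler_normB _ _)) // !ger0_norm.
Qed.

Lemma expect_mix (S : finType) (c : R) (p f : S -> R) (z : S) :
  expect (fun s => (1 - c) * p s + c * (if s == z then 1 else 0)) f
  = (1 - c) * expect p f + c * f z.
Proof.
rewrite /expect; under eq_bigr => s _ do rewrite mulrDl -!mulrA.
by rewrite big_split /= -!mulr_sumr sum_if_eq_mul.
Qed.

Lemma variance_le_shift (S : finType) (p f : S -> R) (v r M : R) :
  0 <= r <= 1 -> 0 <= v <= M -> expect p f = v - r ->
  variance p f <= expect p (fun s => f s ^+ 2) - v ^+ 2 + 2 * M.
Proof.
move=> /andP[r0 r1] /andP[v0 vM] Ef; rewrite /variance Ef.
have rv : r * v <= v by rewrite ler_piMl.
nra.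
Qed.

End Distributions.

Section Occupancy.
Variables (R : realType) (S A : finType) (T : kernel R S A) (d : nat -> S -> A) (s1 : S).

Lemma expect_occS n f : expect (occ T d s1 n.+1) f
  = expect (occ T d s1 n) (fun s => expect (T n.+1 s (d n.+1 s)) f).
Proof.
rewrite /expect /=; under eq_bigr => s' _ do rewrite mulr_suml.
rewrite exchange_big /=; apply: eq_bigr => s _; rewrite mulr_sumr.
by apply: eq_bigr => s' _; rewrite mulrA.
Qed.

Lemma occ_is_dist (H n : nat) :
  (forall h s a, (1 <= h <= H)%N -> is_dist (T h s a)) -> (n <= H)%N ->
  is_dist (occ T d s1 n).
Proof.
move=> Td; elim: n => [|n IH] nH; first exact: is_dist_if_eq.
have occd := IH (ltnW nH).
have Tnd s : is_dist (T n.+1 s (d n.+1 s)) by apply: Td; lia.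
split=> [s'|].
  by apply: sumr_ge0 => s _; rewrite mulr_ge0 ?occd.1 ?(Tnd s).1.
transitivity (expect (occ T d s1 n.+1) (fun _ => 1)).
  by rewrite /expect; under [RHS]eq_bigr do rewrite mulr1.
rewrite expect_occS -[RHS](expect_cst1 occd); apply: eq_bigr => s _.
by rewrite (expect_cst1 (Tnd s)).
Qed.

End Occupancy.

Section RobustValue.
Variables (R : realType) (S A : finType) (H : nat) (rho : R).
Variables (Pstar : kernel R S A) (Rw : nat -> S -> A -> R).
Hypothesis rho_ge0 : 0 <= rho.
Hypothesis Pstar_dist : forall h s a, (1 <= h <= H)%N -> is_dist (Pstar h s a).
Hypothesis Rw_bound : forall h s a, (1 <= h <= H)%N -> 0 <= Rw h s a <= 1.

Definition admissible (h : nat) (P : kernel R S A) :=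
  forall i s a, (h <= i <= H)%N -> robust_ball rho (Pstar i s a) (P i s a).

Lemma admissibleS h P : admissible h P -> admissible h.+1 P.
Proof. by move=> hP i s a hi; apply: hP; lia. Qed.

Lemma admissible_Pstar h : (1 <= h)%N -> admissible h Pstar.
Proof. by move=> h1 i s a hi; apply: robust_ball_refl => //; apply: Pstar_dist; lia. Qed.

Lemma eval_aux_bounds pi P k h s :
  markov_policy H pi -> (1 <= h)%N -> (h + k <= H.+1)%N -> admissible h P ->
  0 <= eval_aux Rw pi P k h s <= k%:R.
Proof.
move=> pid; elim: k h s => [|k IH] h s h1 hk hP /=; first by rewrite lexx.
have hH : (1 <= h <= H)%N by lia.
set F := fun a => Rw h s a + expect (P h s a) (eval_aux Rw pi P k h.+1).
have F_bound a : 0 <= F a <= k.+1%:R.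
  have /andP[r0 r1] := Rw_bound s a hH.
  have Pd : is_dist (P h s a) by have [] := hP h s a (ltac:(lia)).
  have IHs s' := IH h.+1 s' isT (ltac:(lia)) (admissibleS hP).
  have E0 : 0 <= expect (P h s a) (eval_aux Rw pi P k h.+1).
    by apply: expect_ge0 => // s'; case/andP: (IHs s').
  have Ek : expect (P h s a) (eval_aux Rw pi P k h.+1) <= k%:R.
    by apply: expect_le_bound => // s'; case/andP: (IHs s').
  by rewrite /F -natr1; apply/andP; split; lra.
change (0 <= expect (pi h s) F <= k.+1%:R).
have pi_d := pid h s hH.
by rewrite expect_ge0 ?expect_le_bound // => a; case/andP: (F_bound a).
Qed.

Lemma value_bounds pi P h s :
  markov_policy H pi -> (1 <= h <= H.+1)%N -> admissible h P ->
  0 <= value H Rw pi P h s <= (H.+1 - h)%:R.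
Proof. by move=> pid hh hP; apply: eval_aux_bounds => //; lia. Qed.

Lemma value_end pi P s : value H Rw pi P H.+1 s = 0.
Proof. by rewrite /value subnn. Qed.

Lemma robust_value_le_value pi P h s :
  markov_policy H pi -> (1 <= h <= H.+1)%N -> admissible h P ->
  robust_value H rho Pstar Rw pi h s <= value H Rw pi P h s.
Proof.
move=> pid hh hP; apply: ge_inf; last by exists P.
by exists 0 => _ [P' [hP' ->]]; case/andP: (value_bounds s pid hh hP').
Qed.

Lemma robust_value_ge0 pi h s :
  markov_policy H pi -> (1 <= h <= H.+1)%N -> 0 <= robust_value H rho Pstar Rw pi h s.
Proof.
move=> pid hh; apply: lb_le_inf.
  by exists (value H Rw pi Pstar h s), Pstar; split => //; apply: admissible_Pstar; lia.
by move=> _ [P [hP ->]]; case/andP: (value_bounds s pid hh hP).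
Qed.

Lemma robust_value_bounds pi h s :
  markov_policy H pi -> (1 <= h <= H.+1)%N ->
  0 <= robust_value H rho Pstar Rw pi h s <= (H.+1 - h)%:R.
Proof.
move=> pid hh; rewrite robust_value_ge0 //=.
have hP : admissible h Pstar by apply: admissible_Pstar; lia.
apply: le_trans (robust_value_le_value s pid hh hP) _.
by case/andP: (value_bounds s pid hh hP).
Qed.

Lemma robust_value_end pi s :
  markov_policy H pi -> robust_value H rho Pstar Rw pi H.+1 s = 0.
Proof.
move=> pid; have := robust_value_bounds s pid (ltac:(lia) : (1 <= H.+1 <= H.+1)%N).
by rewrite subnn => /andP[V0 V_le]; apply/le_anti; rewrite V0 V_le.
Qed.

Lemma robust_value_le_optimal pi s :
  markov_policy H pi -> robust_value H rho Pstar Rw pi 1 s <= optimal_value H rho Pstar Rw 1 s.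
Proof.
move=> pid; apply: ub_le_sup; last by exists pi.
exists H%:R => _ [pi' [pid' ->]].
by have /andP[_] := robust_value_bounds s pid' (ltac:(lia) : (1 <= 1 <= H.+1)%N); rewrite subn1.
Qed.

Lemma det_policy_markov (d : nat -> S -> A) : markov_policy H (det_policy R d).
Proof. by move=> h s _; apply: is_dist_if_eq. Qed.

Lemma value_det_rec d P h s : (h <= H)%N ->
  value H Rw (det_policy R d) P h s
  = Rw h s (d h s) + expect (P h s (d h s)) (value H Rw (det_policy R d) P h.+1).
Proof. by move=> hH; rewrite /value subSn //= subSS; apply: sum_if_eq_mul. Qed.

Section ArgminKernel.
Variables (d : nat -> S -> A) (Tt : kernel R S A) (s1 : S).
Hypothesis rho_lt1 : rho < 1.

Local Notation pi := (det_policy R d).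
Local Notation V := (robust_value H rho Pstar Rw pi).
Let pid : markov_policy H pi := det_policy_markov d.

Hypothesis Tt_argmin : forall h s a, (1 <= h <= H)%N ->
  robust_ball rho (Pstar h s a) (Tt h s a) /\
  forall P, robust_ball rho (Pstar h s a) P ->
    expect (Tt h s a) (V h.+1) <= expect P (V h.+1).

Lemma admissible_Tt h : (1 <= h)%N -> admissible h Tt.
Proof. by move=> h1 i s a hi; apply: (Tt_argmin s a _).1; lia. Qed.

Lemma Tt_dist h s a : (1 <= h <= H)%N -> is_dist (Tt h s a).
Proof. by move=> hh; have [] := (Tt_argmin s a hh).1. Qed.

Lemma robust_value_det_eq h s : (1 <= h <= H.+1)%N -> V h s = value H Rw pi Tt h s.
Proof.
move=> hh; move: h hh s; apply: (nat_down_ind (P := fun h => forall s, V h s = _)).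
  by move=> s; rewrite (robust_value_end s pid) value_end.
move=> h /andP[h1 hH] IH s; apply/le_anti.
have hh : (1 <= h <= H.+1)%N by lia.
rewrite (robust_value_le_value s pid hh (admissible_Tt h1)) /=.
apply: lb_le_inf; first by exists (value H Rw pi Tt h s), Tt; split; first exact: admissible_Tt.
move=> _ [P [hP ->]]; rewrite !value_det_rec //; apply: lerD => //.
have hdh : (h <= h <= H)%N by lia.
have Pd : is_dist (P h s (d h s)) by have [] := hP h s (d h s) hdh.
apply: (@le_trans _ _ (expect (P h s (d h s)) (V h.+1))).
- rewrite /expect; under eq_bigr => s' _ do rewrite -IH.
  exact: (Tt_argmin s (d h s) (ltac:(lia) : (1 <= h <= H)%N)).2 _ (hP h s (d h s) hdh).
- apply: ler_expect Pd _ => s'.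
  by apply: robust_value_le_value; [|lia|apply: admissibleS].
Qed.

Lemma robust_value_bellman h s : (1 <= h <= H)%N ->
  V h s = Rw h s (d h s) + expect (Tt h s (d h s)) (V h.+1).
Proof.
move=> /andP[h1 hH]; rewrite robust_value_det_eq ?value_det_rec //; last lia.
by congr (_ + _); apply: eq_bigr => s' _; rewrite robust_value_det_eq //; lia.
Qed.

Hypothesis zero_value : exists s0, optimal_value H rho Pstar Rw 1 s0 = 0.

Lemma robust_value_has_zero h : (1 <= h <= H.+1)%N -> exists z, V h z = 0.
Proof.
elim: h => [//|h IH] hh; case: (posnP h) => [->|h_gt0].
  have [s0 opt0] := zero_value; exists s0; apply/le_anti.
  by rewrite robust_value_ge0 // andbT -opt0 robust_value_le_optimal.
have [z Vz] := IH (ltac:(lia)); have hH : (1 <= h <= H)%N by lia.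
apply: (expect_eq0_exists_zero (Tt_dist z (d h z) hH)).
  by move=> s'; apply: robust_value_ge0 => //; lia.
have /andP[r0 _] := Rw_bound z (d h z) hH.
have E0 : 0 <= expect (Tt h z (d h z)) (V h.+1).
  by apply: expect_ge0 (Tt_dist _ _ hH) _ => s'; apply: robust_value_ge0 => //; lia.
by move: (robust_value_bellman z hH); rewrite Vz; lra.
Qed.

(* [Tt] does at least as well for the adversary as moving mass [rho] of [Pstar]
   onto a state of zero value, so the continuation value is at most [(1 - rho) / rho]. *)
Lemma robust_value_le_invr h s : 0 < rho -> (1 <= h <= H.+1)%N -> V h s <= rho^-1.
Proof.
move=> rho_gt0 hh; move: h hh s; apply: (nat_down_ind (P := fun h => forall s, V h s <= _)).
  by move=> s; rewrite (robust_value_end s (pid)) invr_ge0.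
move=> h hh IH s; have hH : (1 <= h <= H)%N by lia.
have [z Vz] := robust_value_has_zero (ltac:(lia) : (1 <= h.+1 <= H.+1)%N).
have rho01 : 0 <= rho <= 1 by rewrite rho_ge0 ltW.
have Pd := Pstar_dist s (d h s) hH.
have := (Tt_argmin s (d h s) hH).2 _ (robust_ball_mix z rho01 Pd).
rewrite expect_mix Vz mulr0 addr0 => ET_le.
have EP_le : (1 - rho) * expect (Pstar h s (d h s)) (V h.+1) <= (1 - rho) * rho^-1.
  by rewrite ler_wpM2l ?subr_ge0 ?(ltW rho_lt1) // (expect_le_bound Pd).
move: EP_le; rewrite [X in _ <= X]mulrBl mul1r mulfV ?gt_eqF // => EP_le.
have /andP[_ r1] := Rw_bound s (d h s) hH.
by rewrite robust_value_bellman //; lra.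
Qed.

Lemma robust_value_le_minH_invrho h s : (1 <= h <= H)%N ->
  0 <= V h s <= minH_invrho H rho.
Proof.
move=> hh; have /andP[V0 V_le] := robust_value_bounds s (pid)
  (ltac:(lia) : (1 <= h <= H.+1)%N).
have V_leH : V h s <= H%:R by apply: le_trans V_le _; rewrite ler_nat; lia.
rewrite V0 /minH_invrho; case: eqP => // /eqP rho_neq0.
rewrite le_min V_leH robust_value_le_invr //; last lia.
by rewrite lt_def rho_neq0.
Qed.

Let sq_moment n := expect (occ Tt d s1 n) (fun s => V n.+1 s ^+ 2).

Lemma expect_occ_variance_le i : (i < H)%N ->
  expect (occ Tt d s1 i) (fun s => variance (Tt i.+1 s (d i.+1 s)) (V i.+2))
  <= sq_moment i.+1 - sq_moment i + 2 * minH_invrho H rho.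
Proof.
move=> iH; have hi : (1 <= i.+1 <= H)%N by lia.
have occd := occ_is_dist d s1 Tt_dist (ltnW iH).
set M := minH_invrho H rho.
apply: (@le_trans _ _ (expect (occ Tt d s1 i) (fun s =>
  expect (Tt i.+1 s (d i.+1 s)) (fun s' => V i.+2 s' ^+ 2) - V i.+1 s ^+ 2 + 2 * M))).
  apply: ler_expect occd _ => s.
  apply: (variance_le_shift (Rw_bound s (d i.+1 s) hi) (robust_value_le_minH_invrho s hi)).
  by rewrite (robust_value_bellman s hi) addrC addKr.
rewrite /sq_moment expect_occS /expect.
under eq_bigr => s _ do rewrite mulrDr mulrBr.
by rewrite big_split sumrB -mulr_suml occd.2 mul1r.
Qed.

Lemma expected_variance_sum_le :
  \sum_(i < H) \sum_s occ Tt d s1 i s * variance (Tt i.+1 s (d i.+1 s)) (V i.+2)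
  <= 2 * H%:R * minH_invrho H rho.
Proof.
apply: le_trans (ler_sum _ (fun i _ => expect_occ_variance_le (ltn_ord i))) _.
rewrite big_split /= sumr_const card_ord.
rewrite -(big_mkord xpredT (fun i => sq_moment i.+1 - sq_moment i)) telescope_sumr //.
have sq_end : sq_moment H = 0.
  rewrite /sq_moment /expect big1 // => s _.
  by rewrite (robust_value_end s (pid)) expr0n mulr0.
have sq_start : 0 <= sq_moment 0.
  by apply: expect_ge0 (occ_is_dist d s1 Tt_dist (leq0n H)) _ => s; apply: sqr_ge0.
rewrite sq_end -mulr_natr; lra.
Qed.

End ArgminKernel.
End RobustValue.

Theorem lemma8 (R : realType) (S A : finType) (H : nat) (rho : R)
  (Pstar : kernel R S A) (Rw : nat -> S -> A -> R) (s1 : S)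
  (d : nat -> S -> A) (Tt : kernel R S A) :
  0 <= rho -> rho < 1 ->
  (forall h s a, (1 <= h <= H)%N -> is_dist (Pstar h s a)) ->
  (forall h s a, (1 <= h <= H)%N -> 0 <= Rw h s a <= 1) ->
  (* vanishing minimal value assumption *)
  (exists s0, optimal_value H rho Pstar Rw 1 s0 = 0) ->
  (forall s, 0 <= optimal_value H rho Pstar Rw 1 s) ->
  ~ (forall s, optimal_value H rho Pstar Rw 1 s1 <= optimal_value H rho Pstar Rw 1 s) ->
  (* Tt_h(.|s,a) in argmin_{P in P_rho(s,a;P*_h)} E_P[V^pi_{h+1}] *)
  (forall h s a, (1 <= h <= H)%N ->
     robust_ball rho (Pstar h s a) (Tt h s a) /\
     forall P, robust_ball rho (Pstar h s a) P ->
       expect (Tt h s a) (robust_value H rho Pstar Rw (@det_policy R S A d) h.+1)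
       <= expect P (robust_value H rho Pstar Rw (@det_policy R S A d) h.+1)) ->
  \sum_(i < H) \sum_s occ Tt d s1 i s *
      variance (Tt i.+1 s (d i.+1 s)) (robust_value H rho Pstar Rw (@det_policy R S A d) i.+2)
  <= 2 * H%:R * minH_invrho H rho.
Proof.
(* Only the existence of a state of zero optimal value is needed. *)
move=> rho_ge0 rho_lt1 Pstar_dist Rw_bound zero_value _ _ Tt_argmin.
exact: expected_variance_sum_le.
Qed.
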